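(* Let $M\in S_d^+$, let $\mathcal T$ be an $M$-reduced mesh with associated Hopf–Lax operator $\Lambda$, and fix $T\in\mathcal T$ with non-zero vertices $v_1,\dots,v_d$. Define $\delta_+:\mathbb Z^d\to\mathbb R_+\cup\{\infty\}$ by $\delta_+(z):=\infty$ if $-z\notin\mathbb R_+T:=\{rx;\ r\ge0,\ x\in T\}$, and otherwise, writing $z+\beta_1v_1+\dots+\beta_dv_d=0$ with $\beta_i\in\mathbb Z_{\ge0}$, $$\delta_+(z):=\|z\|_M+(\sin\theta_M(T))^2\sum_{i=1}^d s(\beta_i)\|v_i\|_M,\qquad s(\beta):=\sum_{k=1}^{\beta}\frac1k.$$ Then $\delta_+$ is a discrete super-solution.
   Context: $S_d^+$ is the set of $d\times d$ symmetric positive definite matrices; $\langle u,v\rangle_M:=u^TMv$, $\|u\|_M:=\sqrt{\langle u,u\rangle_M}$. An $M$-reduced mesh is a finite conforming mesh $\mathcal T$ of simplices in $\mathbb R^d$ such that: (I) the union of its simplices is a neighborhood of the origin; (II) the vertices of each $T\in\mathcal T$ lie in $\mathbb Z^d$ and $T$ has volume $1/d!$; (III) each $T\in\mathcal T$ has the origin as a vertex, and its other vertices $v_1,\dots,v_d$ satisfy $\langle v_i,v_j\rangle_M\ge0$ for all $i,j$. (When $-z\in\mathbb R_+T$ with $z\in\mathbb Z^d$, the $v_i$ form a basis of $\mathbb Z^d$, so the nonnegative integers $\beta_i$ exist and are unique.) The angle $\theta_M(T)\in[0,\pi]$ is given by $\cos\theta_M(T):=\min_{u,v\in T\setminus\{0\}}\frac{\langle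 u,v\rangle_M}{\|u\|_M\|v\|_M}$. For $\delta:\mathbb Z^d\to\mathbb R_+\cup\{\infty\}$ and $z\in\mathbb Z^d$, $\Lambda(\delta,z):=\min\{\|\sum_{i=1}^k\alpha_iw_i\|_M+\sum_{i=1}^k\alpha_i\delta(z+w_i)\}$ over $1\le k\le d$, $\alpha_i\ge0$ with $\sum_i\alpha_i=1$, and non-zero vertices $w_1,\dots,w_k$ of a common simplex of $\mathcal T$ (convention $0\times\infty=0$). A map $\delta$ is a super-solution if $\delta(0)=0$ and $\delta(z)\ge\Lambda(\delta,z)$ for all $z\in\mathbb Z^d\setminus\{0\}$. *)

From HB Require Import structures.
From mathcomp Require Import all_boot all_order all_algebra.
From mathcomp Require Import all_classical all_reals all_analysis.
Set Implicit Arguments. Unset Strict Implicit. Unset Printing Implicit Defensive.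
Import Order.TTheory GRing.Theory Num.Theory.
Local Open Scope ring_scope.

(* A simplex T of an
   M-reduced mesh has the origin as a vertex (condition (III)); it is
   represented by the matrix V : 'M[int]_d whose rows are its non-zero
   vertices v_1, ..., v_d, i.e. T = conv {0, v_1, ..., v_d}. *)

Section Defs.
Variables (R : realType) (d : nat).

Definition ipM (M : 'M[R]_d) (u v : 'rV[R]_d) : R := (u *m M *m v^T) 0 0.
Definition nrmM (M : 'M[R]_d) (u : 'rV[R]_d) : R := Num.sqrt (ipM M u u).

Definition spd (M : 'M[R]_d) : Prop :=
  M^T = M /\ forall u : 'rV[R]_d, u != 0 -> 0 < ipM M u u.

Definition toR (z : 'rV[int]_d) : 'rV[R]_d := map_mx (fun x : int => x%:~R) z.

Definition vertR (V : 'M[int]_d) (i : 'I_d) : 'rV[R]_d := toR (row i V).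

Definition in_simplex (V : 'M[int]_d) (x : 'rV[R]_d) : Prop :=
  exists lam : 'I_d -> R, (forall i, 0 <= lam i) /\ \sum_i lam i <= 1 /\
    x = \sum_i lam i *: vertR V i.

Definition is_vertex (V : 'M[int]_d) (x : 'rV[R]_d) : Prop :=
  x = 0 \/ exists i, x = vertR V i.

Definition in_conv (S : 'rV[R]_d -> Prop) (x : 'rV[R]_d) : Prop :=
  exists (n : nat) (p : 'I_n -> 'rV[R]_d) (lam : 'I_n -> R),
    (forall i, S (p i)) /\ (forall i, 0 <= lam i) /\ \sum_i lam i = 1 /\
    x = \sum_i lam i *: p i.

Definition in_cone (V : 'M[int]_d) (x : 'rV[R]_d) : Prop :=
  exists r : R, 0 <= r /\ exists2 y, in_simplex V y & x = r *: y.

Definition reduced_mesh (M : 'M[R]_d) (mesh : seq 'M[int]_d) : Prop :=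
  (forall V W, V \in mesh -> W \in mesh -> forall x,
      (in_simplex V x /\ in_simplex W x) <->
      in_conv (fun y => is_vertex V y /\ is_vertex W y) x) /\
  (exists2 eps : R, 0 < eps & forall x : 'rV[R]_d,
      (forall i, `|x 0 i| < eps) -> exists2 V, V \in mesh & in_simplex V x) /\
  (* (II) integer vertices and volume 1/d!, i.e. |det (v_1,...,v_d)| = 1 *)
  (forall V, V \in mesh -> `|\det V| = 1) /\
  (forall V, V \in mesh -> forall i j, 0 <= ipM M (vertR V i) (vertR V j)).

(* cos theta_M(T) (a min, written as an inf) and theta_M(T) in [0, pi] *)
Definition cos_theta (M : 'M[R]_d) (V : 'M[int]_d) : R :=
  inf [set c : R | exists u v : 'rV[R]_d,
         [/\ in_simplex V u, u != 0, in_simplex V v, v != 0 &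
             c = ipM M u v / (nrmM M u * nrmM M v)]].
Definition theta (M : 'M[R]_d) (V : 'M[int]_d) : R := acos (cos_theta M V).

Definition harm (b : nat) : R := \sum_(1 <= k < b.+1) (k%:R)^-1.

(* Hopf-Lax operator Lambda(delta, z) (a min, written as an inf);
   the convention 0 * oo = 0 is the one of MathComp-Analysis' \bar R. *)
Definition HopfLax (M : 'M[R]_d) (mesh : seq 'M[int]_d)
  (delta : 'rV[int]_d -> \bar R) (z : 'rV[int]_d) : \bar R :=
  ereal_inf [set e : \bar R | exists2 V, V \in mesh &
    exists k : nat, (1 <= k <= d)%N /\
    exists f : 'I_k -> 'I_d, injective f /\
    exists alpha : 'I_k -> R, (forall i, 0 <= alpha i) /\ \sum_i alpha i = 1 /\
      e = ((nrmM M (\sum_i alpha i *: vertR V (f i)))%:E +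
           \sum_i (alpha i)%:E * delta (z + row (f i) V)%R)%E].

Definition supersolution (M : 'M[R]_d) (mesh : seq 'M[int]_d)
  (delta : 'rV[int]_d -> \bar R) : Prop :=
  (forall z, (0 <= delta z)%E) /\ delta 0 = 0%E /\
  (forall z, z != 0 -> (HopfLax M mesh delta z <= delta z)%E).

Definition cone_coeffs (V : 'M[int]_d) (z : 'rV[int]_d) (b : 'I_d -> nat) : Prop :=
  toR z + \sum_i (b i)%:R *: vertR V i = 0.

Definition deltap_val (M : 'M[R]_d) (V : 'M[int]_d) (z : 'rV[int]_d)
  (b : 'I_d -> nat) : R :=
  nrmM M (toR z) + sin (theta M V) ^+ 2 * \sum_i harm (b i) * nrmM M (vertR V i).

(* delta_+ ; when -z in R_+ T the (unique) beta is picked by choice *)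
Definition deltap (M : 'M[R]_d) (V : 'M[int]_d) (z : 'rV[int]_d) : \bar R :=
  match pselect (in_cone V (- toR z)) with
  | left _ =>
      match pselect (exists b, cone_coeffs V z b) with
      | left H => (deltap_val M V z (proj1_sig (cid H)))%:E
      | right _ => +oo%E
      end
  | right _ => +oo%E
  end.

End Defs.

From HB Require Import structures.
From mathcomp Require Import all_boot all_order all_algebra.
From mathcomp Require Import all_classical all_reals all_analysis.
From mathcomp Require Import ring lra.
Import Order.TTheory GRing.Theory Num.Theory.
Local Open Scope ring_scope.

(* Write u := -z = \sum_i beta_i v_i, r := ||u||_M and B := \sum_i beta_i, and
   evaluate the Hopf-Lax operator on the whole simplex with the weights
   beta_i / B.  Moving from z to z + v_i lowers s(beta_i) by 1/beta_i, so the
   super-solution inequality reduces to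
     beta_i ||u - v_i|| r <= beta_i <u - v_i, u> + sin^2 theta ||v_i|| r
   for every i, because \sum_i beta_i <u - v_i, u> = (B - 1) r^2.  Writing
   u = a + v with a := u - v_i and v := v_i, this is a planar inequality in
   ||a||, ||v|| and <a, v>: the angle between a and v is at most theta since a
   is a non-negative combination of vertices, and ||a|| >= (beta_i - 1) ||v||
   since the vertices make acute angles. *)

Lemma cosine_defect_le (R : realFieldType) (x y w r c b : R) :
  0 <= x -> 0 <= y -> 0 <= c <= 1 -> c * (x * y) <= w -> 0 <= r ->
  r ^+ 2 = x ^+ 2 + 2 * w + y ^+ 2 -> 1 <= b -> (b - 1) * y <= x ->
  b * x * r <= b * (x ^+ 2 + w) + (1 - c ^+ 2) * y * r.
Proof.
move=> x0 y0 /andP[c0 c1] cw r0 hr b1 hby.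
have e0 : 0 <= 1 - c ^+ 2 by nra.
have w0 : 0 <= w by apply: le_trans cw; rewrite !mulr_ge0.
set P := x * r - (x ^+ 2 + w).
have [Pn|Pp] := lerP P 0.
  have : b * P <= 0 by rewrite mulr_ge0_le0 // ?(le_trans ler01).
  have : 0 <= (1 - c ^+ 2) * y * r by rewrite !mulr_ge0.
  by rewrite /P; lra.
set D := x * r + x ^+ 2 + w.
have Dp : 0 < D.
  have -> : D = P + 2 * (x ^+ 2 + w) by rewrite /D /P; ring.
  by rewrite ltr_wpDr // mulr_ge0 // addr_ge0 // sqr_ge0.
(* Multiplying by the conjugate D turns the defect P into x^2 y^2 - w^2,
   which the angle bound c x y <= w controls. *)
have PD : P * D = x ^+ 2 * y ^+ 2 - w ^+ 2.
  transitivity (x ^+ 2 * r ^+ 2 - (x ^+ 2 + w) ^+ 2); first by rewrite /P /D; ring.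
  by rewrite hr; ring.
have cw2 : c ^+ 2 * (x ^+ 2 * y ^+ 2) <= w ^+ 2.
  by rewrite -!exprMn ler_pXn2r // ?nnegrE !mulr_ge0.
have xr : x <= r by rewrite -(@ler_pXn2r _ 2) ?nnegrE // hr; nra.
have bxy : b * x * y <= 2 * x ^+ 2 + y ^+ 2.
  have : (b - 1) * y * x <= x * x by rewrite ler_wpM2r.
  have : 0 <= (x - y) ^+ 2 by rewrite sqr_ge0.
  by rewrite !expr2; nra.
have bD : b * x ^+ 2 * y <= r * D by rewrite /D; nra.
suff : b * P * D <= (1 - c ^+ 2) * y * r * D by rewrite ler_pM2r // /P; lra.
have h : (1 - c ^+ 2) * y * (b * x ^+ 2 * y) <= (1 - c ^+ 2) * y * (r * D).
  by rewrite ler_wpM2l // mulr_ge0.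
by rewrite -[b * P * D]mulrA PD; nra.
Qed.

Section SimplexGeometry.
Local Set Implicit Arguments.
Local Unset Strict Implicit.
Variables (R : realType) (d : nat).
Implicit Types (M : 'M[R]_d) (u v w : 'rV[R]_d) (V : 'M[int]_d).

Section BilinearForm.
Variable M : 'M[R]_d.

Lemma ipMDl u v w : ipM M (u + v) w = ipM M u w + ipM M v w.
Proof. by rewrite /ipM !mulmxDl mxE. Qed.

Lemma ipMDr u v w : ipM M w (u + v) = ipM M w u + ipM M w v.
Proof. by rewrite /ipM linearD /= mulmxDr mxE. Qed.

Lemma ipMZl a u w : ipM M (a *: u) w = a * ipM M u w.
Proof. by rewrite /ipM -!scalemxAl mxE. Qed.

Lemma ipMZr a u w : ipM M w (a *: u) = a * ipM M w u.
Proof. by rewrite /ipM linearZ /= -scalemxAr mxE. Qed.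

Lemma ipM0l w : ipM M 0 w = 0.
Proof. by rewrite -(scale0r 0) ipMZl mul0r. Qed.

Lemma ipMNl u w : ipM M (- u) w = - ipM M u w.
Proof. by rewrite -scaleN1r ipMZl mulN1r. Qed.

Lemma ipMNr u w : ipM M w (- u) = - ipM M w u.
Proof. by rewrite -scaleN1r ipMZr mulN1r. Qed.

Lemma ipM_suml (I : finType) (a : I -> R) (x : I -> 'rV[R]_d) w :
  ipM M (\sum_i a i *: x i) w = \sum_i a i * ipM M (x i) w.
Proof.
elim/big_rec2: _ => [|i y1 y2 _ <-]; first exact: ipM0l.
by rewrite ipMDl ipMZl.
Qed.

Lemma ipM_sumr (I : finType) (a : I -> R) (x : I -> 'rV[R]_d) w :
  ipM M w (\sum_i a i *: x i) = \sum_i a i * ipM M w (x i).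
Proof.
elim/big_rec2: _ => [|i y1 y2 _ <-]; last by rewrite ipMDr ipMZr.
by rewrite -(scale0r 0) ipMZr mul0r.
Qed.

Lemma ipMC : M^T = M -> forall u v, ipM M u v = ipM M v u.
Proof.
move=> hM u v; rewrite /ipM.
have -> : v *m M *m u^T = (u *m M *m v^T)^T by rewrite !trmx_mul trmxK hM mulmxA.
by rewrite [RHS]mxE.
Qed.

Lemma nrmM_ge0 u : 0 <= nrmM M u.
Proof. exact: sqrtr_ge0. Qed.

Lemma nrmM0 : nrmM M 0 = 0.
Proof. by rewrite /nrmM ipM0l sqrtr0. Qed.

Lemma nrmMN u : nrmM M (- u) = nrmM M u.
Proof. by rewrite /nrmM ipMNl ipMNr opprK. Qed.

Lemma nrmMZ k u : 0 <= k -> nrmM M (k *: u) = k * nrmM M u.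
Proof.
move=> hk; rewrite /nrmM ipMZl ipMZr mulrA sqrtrM ?mulr_ge0 //.
by rewrite -expr2 sqrtr_sqr ger0_norm.
Qed.

Hypothesis M_pos : forall u, u != 0 -> 0 < ipM M u u.

Lemma ipMxx_ge0 u : 0 <= ipM M u u.
Proof. by have [->|/M_pos/ltW] := eqVneq u 0; rewrite ?ipM0l. Qed.

Lemma sqr_nrmM u : nrmM M u ^+ 2 = ipM M u u.
Proof. by rewrite sqr_sqrtr // ipMxx_ge0. Qed.

Lemma nrmM_gt0 u : u != 0 -> 0 < nrmM M u.
Proof. by move=> hu; rewrite sqrtr_gt0 M_pos. Qed.

End BilinearForm.

Lemma toRD (z z' : 'rV[int]_d) : toR R (z + z') = toR R z + toR R z'.
Proof. by apply/rowP => j; rewrite !mxE intrD. Qed.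

Lemma toR0 : toR R (0 : 'rV[int]_d) = 0.
Proof. by apply/rowP => j; rewrite !mxE. Qed.

Lemma toR_eq0 (z : 'rV[int]_d) : (toR R z == 0) = (z == 0).
Proof.
apply/eqP/eqP => [/rowP h|->]; last exact: toR0.
by apply/rowP => j; have /eqP := h j; rewrite !mxE intr_eq0 => /eqP.
Qed.

Definition vert_comb V (p : 'I_d -> R) : 'rV[R]_d := \sum_i p i *: vertR R V i.

Lemma eq_vert_comb V p q : p =1 q -> vert_comb V p = vert_comb V q.
Proof. by move=> e; apply: eq_bigr => i _; rewrite e. Qed.

Lemma vert_comb0 V : vert_comb V (fun _ => 0) = 0.
Proof. by rewrite /vert_comb big1 // => i _; rewrite scale0r. Qed.

Lemma vert_combB V p q :
  vert_comb V (fun i => p i - q i) = vert_comb V p - vert_comb V q.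
Proof. by rewrite /vert_comb -sumrB; apply: eq_bigr => i _; rewrite scalerBl. Qed.

Lemma vert_combZ V k p : vert_comb V (fun i => k * p i) = k *: vert_comb V p.
Proof. by rewrite /vert_comb scaler_sumr; apply: eq_bigr => i _; rewrite scalerA. Qed.

Lemma vert_comb_delta V i : vert_comb V (fun j => (j == i)%:R) = vertR R V i.
Proof.
rewrite /vert_comb (bigD1 i) //= big1 => [|j /negbTE ->]; last by rewrite scale0r.
by rewrite eqxx scale1r addr0.
Qed.

Lemma vert_comb_mx V p :
  vert_comb V p = (\row_i p i) *m map_mx (fun x : int => x%:~R : R) V.
Proof.
rewrite mulmx_sum_row; apply: eq_bigr => i _.
by rewrite mxE /vertR /toR map_row.
Qed.

Lemma vert_comb_inj V p q :
  \det V != 0 -> vert_comb V p = vert_comb V q -> p =1 q.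
Proof.
move=> hV e.
have hu : map_mx (fun x : int => x%:~R : R) V \in unitmx.
  by rewrite unitmxE unitfE (det_map_mx (intr : {rmorphism int -> R})) intr_eq0.
suff /rowP h : (\row_i p i) = (\row_i q i) by move=> i; have := h i; rewrite !mxE.
by rewrite -(mulmxK hu (\row_i p i)) -(mulmxK hu (\row_i q i)) -!vert_comb_mx e.
Qed.

Lemma vertR_neq0 V i : \det V != 0 -> vertR R V i != 0.
Proof.
move=> hV; apply/eqP => h.
have := vert_comb_inj hV (etrans (vert_comb_delta V i) (etrans h (esym (vert_comb0 V)))) i.
by rewrite eqxx => /eqP; rewrite oner_eq0.
Qed.

Lemma vert_comb_sum_gt0 V p : (forall i, 0 <= p i) ->
  vert_comb V p != 0 -> 0 < \sum_i p i.
Proof.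
move=> hp; apply: contraR; rewrite -leNgt => hP.
have /(psumr_eq0P (fun i _ => hp i)) p0 : \sum_i p i = 0.
  by apply/le_anti; rewrite hP sumr_ge0.
by rewrite /vert_comb big1 // => i _; rewrite p0 // scale0r.
Qed.

Lemma in_simplex_vertR V i : in_simplex V (vertR R V i).
Proof.
exists (fun j => (j == i)%:R); split; first by move=> j; rewrite ler0n.
split; last by rewrite -[LHS]vert_comb_delta.
by rewrite (bigD1 i) //= big1 ?eqxx ?addr0 // => j /negbTE ->.
Qed.

Lemma in_simplex_normalize V p : (forall i, 0 <= p i) -> 0 < \sum_i p i ->
  in_simplex V ((\sum_i p i)^-1 *: vert_comb V p).
Proof.
move=> hp hP; exists (fun i => (\sum_i p i)^-1 * p i); split.
  by move=> i; rewrite mulr_ge0 // invr_ge0 ltW.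
by split; [rewrite -mulr_sumr mulVf ?gt_eqF | rewrite -vert_combZ].
Qed.

Lemma in_cone_vert_comb V p : (forall i, 0 <= p i) -> in_cone V (vert_comb V p).
Proof.
move=> hp; have [p0|/(vert_comb_sum_gt0 hp) hP] := eqVneq (vert_comb V p) 0.
  exists 0; split => //; exists 0; last by rewrite scale0r p0.
  exists (fun _ => 0); split => //; split; first by rewrite big1.
  by rewrite big1 // => i _; rewrite scale0r.
exists (\sum_i p i); split; first exact: ltW.
exists ((\sum_i p i)^-1 *: vert_comb V p); first exact: in_simplex_normalize.
by rewrite scalerA mulfV ?gt_eqF // scale1r.
Qed.

Section AcuteSimplex.
Variables (M : 'M[R]_d) (V : 'M[int]_d).
Hypothesis acute : forall i j, 0 <= ipM M (vertR R V i) (vertR R V j).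

Lemma ipM_vert_comb p q : ipM M (vert_comb V p) (vert_comb V q) =
  \sum_i \sum_j p i * q j * ipM M (vertR R V i) (vertR R V j).
Proof.
rewrite ipM_suml; apply: eq_bigr => i _.
by rewrite ipM_sumr big_distrr; apply: eq_bigr => j _ /=; ring.
Qed.

Lemma ipM_vert_comb_ge0 p q : (forall i, 0 <= p i) -> (forall i, 0 <= q i) ->
  0 <= ipM M (vert_comb V p) (vert_comb V q).
Proof.
move=> hp hq; rewrite ipM_vert_comb.
by do 2![apply: sumr_ge0 => ? _]; rewrite !mulr_ge0.
Qed.

Lemma ipM_vert_comb_ge_term p q i j :
  (forall i, 0 <= p i) -> (forall i, 0 <= q i) ->
  p i * q j * ipM M (vertR R V i) (vertR R V j)
    <= ipM M (vert_comb V p) (vert_comb V q).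
Proof.
move=> hp hq; rewrite ipM_vert_comb (bigD1 i) //= (bigD1 j) //= -addrA lerDl.
by apply: addr_ge0; apply: sumr_ge0 => k _; rewrite ?mulr_ge0 //;
  apply: sumr_ge0 => l _; rewrite !mulr_ge0.
Qed.

Let angle_set : set R := [set c : R | exists u v : 'rV[R]_d,
  [/\ in_simplex V u, u != 0, in_simplex V v, v != 0 &
      c = ipM M u v / (nrmM M u * nrmM M v)]].

Lemma angle_set_lbound : lbound angle_set 0.
Proof.
move=> c [u [v [[lu [hlu [_ ->]]] _ [lv [hlv [_ ->]]] _ ->]]].
by rewrite divr_ge0 ?mulr_ge0 ?nrmM_ge0 // (ipM_vert_comb_ge0 hlu hlv).
Qed.

Hypotheses (M_pos : forall u, u != 0 -> 0 < ipM M u u) (V_unimodular : \det V != 0).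

Lemma cos_theta_ge0_le1 : (0 < d)%N -> 0 <= cos_theta M V <= 1.
Proof.
move=> d_gt0; set v := vertR R V (Ordinal d_gt0).
have v0 : v != 0 by exact: vertR_neq0.
have angle1 : angle_set 1.
  exists v, v; split => //; try exact: in_simplex_vertR.
  by rewrite -expr2 sqr_nrmM // divff // gt_eqF ?M_pos.
apply/andP; split; first by apply: lb_le_inf; [exists 1 | exact: angle_set_lbound].
by apply: ge_inf angle1; exists 0; exact: angle_set_lbound.
Qed.

Lemma sin_theta_sqr : (0 < d)%N -> sin (theta M V) ^+ 2 = 1 - cos_theta M V ^+ 2.
Proof.
move=> /cos_theta_ge0_le1 /andP[c0 c1].
rewrite /theta sin2cos2 acosK // in_itv /= c1 andbT.
by apply: le_trans c0; rewrite lerN10.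
Qed.

Lemma cos_theta_le_vertR p i : vert_comb V p != 0 -> (forall i, 0 <= p i) ->
  cos_theta M V * (nrmM M (vert_comb V p) * nrmM M (vertR R V i))
    <= ipM M (vert_comb V p) (vertR R V i).
Proof.
move=> a0 hp; have hP := vert_comb_sum_gt0 hp a0.
have v0 : vertR R V i != 0 by exact: vertR_neq0.
rewrite -ler_pdivlMr ?mulr_gt0 ?nrmM_gt0 //.
apply: ge_inf; first by exists 0; exact: angle_set_lbound.
exists ((\sum_i p i)^-1 *: vert_comb V p), (vertR R V i); split => //.
- exact: in_simplex_normalize.
- by rewrite scaler_eq0 negb_or invr_eq0 gt_eqF.
- exact: in_simplex_vertR.
rewrite ipMZl nrmMZ ?invr_ge0 ?ltW //; field.
by rewrite !gt_eqF ?nrmM_gt0.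
Qed.

End AcuteSimplex.

Lemma harm0 : harm R 0 = 0.
Proof. by rewrite /harm big_geq. Qed.

Lemma harmS n : harm R n.+1 = harm R n + (n.+1)%:R^-1.
Proof. by rewrite /harm big_nat_recr. Qed.

Lemma harm_ge0 n : 0 <= harm R n.
Proof. by apply: sumr_ge0 => k _; rewrite invr_ge0 ler0n. Qed.

Lemma cone_coeffsE V z b :
  cone_coeffs R V z b <-> vert_comb V (fun i => (b i)%:R) = - toR R z.
Proof.
rewrite /cone_coeffs -/(vert_comb V _).
by split => [/addr0_eq <-|->]; rewrite ?subrr.
Qed.

Lemma deltap_val_ge0 M V z b : 0 <= deltap_val M V z b.
Proof.
apply: addr_ge0; first exact: nrmM_ge0.
rewrite mulr_ge0 ?sqr_ge0 // sumr_ge0 // => i _.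
by rewrite mulr_ge0 ?harm_ge0 ?nrmM_ge0.
Qed.

Lemma deltapP M V z : deltap M V z = +oo%E \/
  exists2 b, cone_coeffs R V z b & deltap M V z = (deltap_val M V z b)%:E.
Proof.
rewrite /deltap; case: pselect => [_|]; last by left.
case: pselect => [H|]; last by left.
by right; case: (cid H) => b hb; exists b.
Qed.

Lemma deltapE M V z b : \det V != 0 -> cone_coeffs R V z b ->
  deltap M V z = (deltap_val M V z b)%:E.
Proof.
move=> hV /cone_coeffsE hb; rewrite /deltap.
case: pselect => [_|[]]; last by rewrite -hb; apply: in_cone_vert_comb => i.
case: pselect => [H|[]]; last by exists b; apply/cone_coeffsE.
case: (cid H) => b' /cone_coeffsE hb' /=.
have e := vert_comb_inj hV (etrans hb' (esym hb)).
rewrite /deltap_val; congr (_ + _ * _)%:E; apply: eq_bigr => i _.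
by have /eqP := e i; rewrite eqr_nat => /eqP ->.
Qed.

Lemma deltap0 M V : \det V != 0 -> deltap M V 0 = 0%E.
Proof.
move=> hV; have hb : cone_coeffs R V 0 (fun _ => 0%N).
  by apply/cone_coeffsE; rewrite toR0 oppr0 -(vert_comb0 V).
rewrite (deltapE _ hV hb) /deltap_val toR0 nrmM0 big1 ?mulr0 ?addr0 // => i _.
by rewrite harm0 mul0r.
Qed.

End SimplexGeometry.

Section HopfLaxStep.
Local Set Implicit Arguments.
Local Unset Strict Implicit.
Variables (R : realType) (d : nat) (M : 'M[R]_d) (V : 'M[int]_d).
Hypotheses (M_sym : M^T = M) (M_pos : forall u, u != 0 -> 0 < ipM M u u).
Hypotheses (V_unimodular : \det V != 0)
  (acute : forall i j, 0 <= ipM M (vertR R V i) (vertR R V j)).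
Variables (z : 'rV[int]_d) (b : 'I_d -> nat).
Hypotheses (z_neq0 : z != 0) (b_coeffs : cone_coeffs R V z b).

Let beta i : R := (b i)%:R.
Let v i := vertR R V i.
Let u := vert_comb V beta.
Let r := nrmM M u.
Let H := \sum_i harm R (b i) * nrmM M (v i).
Let s2 := sin (theta M V) ^+ 2.

Let uE : u = - toR R z.
Proof. exact/cone_coeffsE. Qed.

Let beta_ge0 i : 0 <= beta i.
Proof. exact: ler0n. Qed.

Let u_neq0 : u != 0.
Proof. by rewrite uE oppr_eq0 toR_eq0. Qed.

Let r_gt0 : 0 < r.
Proof. exact: nrmM_gt0. Qed.

Lemma vert_comb_pred i n : b i = n.+1 ->
  vert_comb V (fun j => (b j - (j == i))%:R) = u - v i.
Proof.
move=> hbi; rewrite /v -vert_comb_delta -vert_combB; apply: eq_vert_comb => j.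
by rewrite natrB //; case: eqP => [->|]; rewrite ?hbi.
Qed.

Lemma deltap_shift i n : b i = n.+1 ->
  deltap M V (z + row i V) = (nrmM M (u - v i) + s2 * (H - nrmM M (v i) / beta i))%:E.
Proof.
move=> hbi.
have hc : cone_coeffs R V (z + row i V) (fun j => (b j - (j == i))%N).
  apply/cone_coeffsE; rewrite (vert_comb_pred hbi) uE toRD opprD.
  by rewrite /v /vertR.
rewrite (deltapE _ V_unimodular hc) /deltap_val toRD -nrmMN opprD -uE.
congr (_ + s2 * _)%:E; rewrite /H (bigD1 i) //= [in RHS](bigD1 i) //=.
rewrite eqxx hbi subn1 /= harmS /beta hbi.
rewrite (eq_bigr (fun j => harm R (b j) * nrmM M (v j))) => [|j /negbTE ->]; last first.
  by rewrite subn0.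
by field; rewrite addrC natr1 pnatr_eq0.
Qed.

Lemma vert_defect_le i : (0 < b i)%N ->
  beta i * nrmM M (u - v i) * r <= beta i * ipM M (u - v i) u + s2 * nrmM M (v i) * r.
Proof.
case hbi: (b i) => [//|n] _.
have d_gt0 : (0 < d)%N by apply: leq_ltn_trans (ltn_ord i).
set a := u - v i; set p := fun j => (b j - (j == i))%:R : R.
have ha : vert_comb V p = a by exact: vert_comb_pred hbi.
have hp j : 0 <= p j by exact: ler0n.
have ua : u = a + v i by rewrite addrNK.
clearbody a.
have hr : r ^+ 2 = nrmM M a ^+ 2 + 2 * ipM M a (v i) + nrmM M (v i) ^+ 2.
  rewrite !sqr_nrmM // ua ipMDl !ipMDr (ipMC M_sym (v i) a); ring.
have hau : ipM M a u = nrmM M a ^+ 2 + ipM M a (v i) by rewrite sqr_nrmM // ua ipMDr.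
have hc : cos_theta M V * (nrmM M a * nrmM M (v i)) <= ipM M a (v i).
  have [a0|a0] := eqVneq a 0; first by rewrite a0 nrmM0 ipM0l !mul0r mulr0.
  by rewrite -ha; apply: cos_theta_le_vertR; rewrite ?ha.
have hb1 : 1 <= beta i by rewrite /beta hbi ler1n.
(* The coefficient of v i in a is beta i - 1, and all cross terms of <a, a> are >= 0. *)
have hby : (beta i - 1) * nrmM M (v i) <= nrmM M a.
  rewrite -(@ler_pXn2r _ 2) ?nnegrE ?mulr_ge0 ?nrmM_ge0 ?subr_ge0 //.
  have -> : beta i - 1 = p i by rewrite /p /beta hbi eqxx subn1 -natr1 addrK.
  rewrite exprMn !sqr_nrmM // -ha expr2.
  exact: ipM_vert_comb_ge_term.
rewrite /s2 sin_theta_sqr // hau.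
by apply: cosine_defect_le; rewrite ?nrmM_ge0 ?cos_theta_ge0_le1.
Qed.

Let B := \sum_i beta i.

Let B_gt0 : 0 < B.
Proof. exact: vert_comb_sum_gt0 beta_ge0 u_neq0. Qed.

Lemma weighted_deltap_shift_le i :
  ((beta i / B)%:E * deltap M V (z + row i V) <=
   (beta i / B * (ipM M (u - v i) u / r + s2 * H))%:E)%E.
Proof.
case hbi: (b i) (@vert_defect_le i) => [|n] hdef.
  by rewrite /beta hbi !mul0r mul0e.
have beta_gt0 : 0 < beta i by rewrite /beta hbi ltr0Sn.
rewrite (deltap_shift hbi) -EFinM lee_fin ler_pM2l ?divr_gt0 //.
have -> : nrmM M (u - v i) + s2 * (H - nrmM M (v i) / beta i) =
    (beta i * nrmM M (u - v i) * r - s2 * nrmM M (v i) * r) / (beta i * r) + s2 * H.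
  by field; rewrite !gt_eqF.
have -> : ipM M (u - v i) u / r = beta i * ipM M (u - v i) u / (beta i * r).
  by field; rewrite !gt_eqF.
by rewrite lerD2r ler_pM2r ?invr_gt0 ?mulr_gt0 // lerBlDr hdef ?hbi.
Qed.

Lemma sum_defect : \sum_i beta i * ipM M (u - v i) u = (B - 1) * r ^+ 2.
Proof.
rewrite sqr_nrmM // -ipM_suml (eq_bigr (fun i => beta i *: u - beta i *: v i)).
  by rewrite sumrB -scaler_suml ipMDl ipMNl ipMZl mulrBl mul1r.
by move=> i _; rewrite scalerBr.
Qed.

Lemma HopfLax_le_deltap_val (mesh : seq 'M[int]_d) : V \in mesh ->
  (HopfLax M mesh (deltap M V) z <= (deltap_val M V z b)%:E)%E.
Proof.
move=> hV; have d_gt0 : (0 < d)%N.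
  by case: d z z_neq0 => [|//] z0; rewrite (_ : z0 = 0) ?eqxx //; apply/rowP => [[]].
apply: ge_ereal_inf; exists ((nrmM M (\sum_i (beta i / B) *: v i))%:E +
    \sum_i ((beta i / B)%:E * deltap M V (z + row i V)))%E.
  exists V => //; exists d; split; first by rewrite d_gt0 leqnn.
  exists id; split => //; exists (fun i => beta i / B); split.
    by move=> i; rewrite divr_ge0 // ltW.
  by split => //; rewrite -mulr_suml divff // gt_eqF.
apply: le_trans.
  by apply: leeD2l; apply: lee_sum => i _; exact: weighted_deltap_shift_le.
rewrite sumEFin -EFinD lee_fin.
have -> : \sum_i (beta i / B) *: v i = B^-1 *: u.
  by rewrite -vert_combZ; apply: eq_vert_comb => i; rewrite mulrC.
have rz : nrmM M (toR R z) = r by rewrite -nrmMN -uE.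
rewrite nrmMZ ?invr_ge0 ?(ltW B_gt0) // -/r /deltap_val rz -/H -/s2.
rewrite (eq_bigr (fun i => beta i * ipM M (u - v i) u / (B * r) + beta i / B * (s2 * H))).
  rewrite big_split /= -!mulr_suml sum_defect -/B.
  by rewrite [X in X <= _](_ : _ = r + s2 * H) //; field; rewrite !gt_eqF.
by move=> i _; field; rewrite !gt_eqF.
Qed.

End HopfLaxStep.

Theorem proposition1p8 (R : realType) (d : nat) (M : 'M[R]_d)
  (mesh : seq 'M[int]_d) (V : 'M[int]_d) :
  spd M -> reduced_mesh M mesh -> V \in mesh ->
  supersolution M mesh (deltap M V).
Proof.
move=> [M_sym M_pos] [_ [_ [unimodular acute]]] hV.
have V_unimodular : \det V != 0.
  by rewrite -normr_eq0 unimodular // oner_eq0.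
split; [|split; first exact: deltap0].
  move=> z; have [->|[b _ ->]] := deltapP M V z; first exact: le0y.
  by rewrite lee_fin deltap_val_ge0.
move=> z z_neq0; have [->|[b hb ->]] := deltapP M V z; first exact: leey.
exact (HopfLax_le_deltap_val M_sym M_pos V_unimodular (acute V hV) z_neq0 hb hV).
Qed.
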